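(* Let $s,b\ge1$ be integers, $y>0$, and $f(x)=1-x-byx^{s+1}$. Then (1) $f$ has no repeated roots, and (2) $f$ has a positive root $\lambda_1(y)$ whose modulus is smaller than the modulus of every other root of $f$; moreover $\lambda_1(y)<1$. *)

From HB Require Import structures.
From mathcomp Require Import all_boot all_order all_algebra.
From mathcomp Require Import complex.
From mathcomp Require Import reals.
Set Implicit Arguments. Unset Strict Implicit. Unset Printing Implicit Defensive.
Import Order.TTheory GRing.Theory Num.Theory.
Local Open Scope ring_scope.

Definition fpoly (R : realType) (s b : nat) (y : R) : {poly R[i]} :=
  1 - 'X - (((b%:R * y)%:C)%C)%:P * 'X^(s.+1).

From HB Require Import structures.
From mathcomp Require Import all_boot all_order all_algebra.
From mathcomp Require Import complex.
From mathcomp Require Import reals.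
From mathcomp Require Import ring lra.
Set Implicit Arguments. Unset Strict Implicit. Unset Printing Implicit Defensive.
Import Order.TTheory GRing.Theory Num.Theory.
Local Open Scope ring_scope.

(* Write f = 1 - X - c X^(s+1) with c = b y > 0; nothing below needs s >= 1.
   A repeated root z satisfies z f'(z) - (s+1) f(z) = s z - (s+1) = 0, so
   z = (s+1)/s > 0, where f'(z) < 0.  The intermediate value theorem gives a
   root l in (0,1).  If f(z) = 0 and |z| <= l, then
   |1 - z| = c |z|^(s+1) <= c l^(s+1) = 1 - l <= 1 - |z|, so the triangle
   inequality 1 <= |1 - z| + |z| is an equality; this forces z to be a
   nonnegative real, hence z = |z| = l. *)

Definition trinomial (R : nzRingType) (c : R) (s : nat) : {poly R} :=
  1 - 'X - c%:P * 'X^(s.+1).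

Lemma horner_trinomial (R : comNzRingType) (c x : R) s :
  (trinomial c s).[x] = 1 - x - c * x ^+ s.+1.
Proof. by rewrite /trinomial !hornerE. Qed.

Lemma horner_deriv_trinomial (R : comNzRingType) (c x : R) s :
  (trinomial c s)^`().[x] = - 1 - c * (x ^+ s *+ s.+1).
Proof. by rewrite /trinomial !derivE /= !hornerE hornerMn hornerXn. Qed.

Lemma map_trinomial (R S : nzRingType) (f : {rmorphism R -> S}) (c : R) s :
  map_poly f (trinomial c s) = trinomial (f c) s.
Proof. by rewrite /trinomial !rmorphB rmorph1 rmorphM /= map_polyX map_polyC map_polyXn. Qed.

Lemma sqr_XsubC_dvdp_root_deriv (F : fieldType) (p : {poly F}) z :
  ('X - z%:P) ^+ 2 %| p -> root p z && root p^`() z.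
Proof.
case/dvdpP=> q ->; rewrite derivM expr2 derivM derivXsubC mul1r mulr1.
by rewrite /root !(hornerXsubC, hornerM, hornerD) subrr !(mulr0, addr0) eqxx.
Qed.

Lemma trinomial_root_deriv_neq0 (F : numFieldType) (c z : F) s :
  0 < c -> root (trinomial c s) z -> ~~ root (trinomial c s)^`() z.
Proof.
move=> c_gt0 /rootP; rewrite horner_trinomial => fz0.
apply/negP => /rootP; rewrite horner_deriv_trinomial => f'z0.
have Euler : s%:R * z = s.+1%:R.
  apply/eqP; rewrite -subr_eq0; apply/eqP.
  transitivity (z * (- 1 - c * (z ^+ s *+ s.+1)) - s.+1%:R * (1 - z - c * z ^+ s.+1)).
    by rewrite exprS; ring.
  by rewrite fz0 f'z0 !mulr0 subr0.
have s_neq0 : s%:R != 0 :> F.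
  apply/eqP => s0; move: Euler; rewrite -natr1 s0 mul0r add0r => /eqP.
  by rewrite eq_sym oner_eq0.
have z_gt0 : 0 < z.
  by rewrite -(mulKf s_neq0 z) Euler mulr_gt0 // invr_gt0 lt0r s_neq0 ler0n.
move/eqP: f'z0; apply/negP; rewrite -opprD oppr_eq0 lt0r_neq0 // addr_gt0 //.
by rewrite mulr_gt0 // mulrn_wgt0 // exprn_gt0.
Qed.

Lemma sqr_XsubC_ndvdp_trinomial (F : numFieldType) (c z : F) s :
  0 < c -> ~~ (('X - z%:P) ^+ 2 %| trinomial c s).
Proof.
move=> c_gt0; apply/negP => /sqr_XsubC_dvdp_root_deriv/andP[fz0].
exact/negP/trinomial_root_deriv_neq0.
Qed.

Lemma trinomial_root_in_01 (R : rcfType) (c : R) s :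
  0 < c -> exists2 l, 0 < l < 1 & root (trinomial c s) l.
Proof.
move=> c_gt0.
have [l /andP[l_ge0 _]] : exists2 l, 0 <= l <= 1 & root (- trinomial c s) l.
  apply: poly_ivt => //; rewrite !hornerN !horner_trinomial expr0n expr1n /=.
  by rewrite mulr0 mulr1 !subr0 subrr sub0r opprK lerN10 ltW.
rewrite rootN => /rootP; rewrite horner_trinomial => fl0.
have l_gt0 : 0 < l.
  rewrite lt0r l_ge0 andbT; apply/eqP => l0; move: fl0.
  by rewrite l0 expr0n /= mulr0 !subr0; apply/eqP; rewrite oner_neq0.
exists l; last by rewrite /root horner_trinomial fl0.
rewrite l_gt0 /=.
have : 0 < c * l ^+ s.+1 by rewrite mulr_gt0 // exprn_gt0.
lra.
Qed.

Lemma trinomial_root_norm_gt (C : numClosedFieldType) (c l z : C) s :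
  0 < c -> 0 < l -> root (trinomial c s) l -> root (trinomial c s) z ->
  z != l -> l < `|z|.
Proof.
move=> c_gt0 l_gt0 /rootP; rewrite horner_trinomial => fl0.
move=> /rootP; rewrite horner_trinomial => fz0 z_neq_l.
rewrite real_ltNge ?normr_real ?gtr0_real //; apply: contraNN z_neq_l => z_le_l.
have norm_1Bz : `|1 - z| = c * `|z| ^+ s.+1.
  by rewrite (subr0_eq fz0) normrM normrX gtr0_norm.
have one_eq : 1 = c * l ^+ s.+1 + l by rewrite -(subr0_eq fl0) subrK.
have zpow_le : c * `|z| ^+ s.+1 <= c * l ^+ s.+1.
  apply: ler_wpM2l; first exact: ltW.
  by apply: lerXn2r => //; rewrite qualifE /= ?normr_ge0 // ltW.
have norm_sum : `|1 - z| + `|z| = 1.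
  apply/eqP; rewrite eq_le; apply/andP; split.
    by rewrite norm_1Bz [leRHS]one_eq; apply: lerD.
  by rewrite -[leLHS]normr1 -{1}(subrK z 1) ler_normD.
have norm_sum_eq : `|(1 - z) + z| = `|1 - z| + `|z| by rewrite subrK normr1 norm_sum.
have [t _ [def_1Bz def_z]] := normCDeq norm_sum_eq.
have t1 : t = 1 by rewrite -[t]mul1r -{1}norm_sum mulrDl -def_1Bz -def_z subrK.
have l_le_z : l <= `|z|.
  by rewrite -(lerD2l (c * l ^+ s.+1)) -one_eq -norm_sum norm_1Bz lerD2r.
by rewrite {1}def_z t1 mulr1 eq_le z_le_l l_le_z.
Qed.

Theorem lemma2p15 (R : realType) (s b : nat) (y : R) :
  (1 <= s)%N -> (1 <= b)%N -> 0 < y ->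
  (forall z : R[i], ~~ (('X - z%:P) ^+ 2 %| fpoly s b y)) /\
  (exists l : R,
     [/\ 0 < l, l < 1, root (fpoly s b y) (l%:C)%C &
      forall z : R[i], root (fpoly s b y) z -> z != (l%:C)%C -> `|(l%:C)%C| < `|z|]).
Proof.
move=> _ b_gt0 y_gt0.
have c_gt0 : 0 < b%:R * y by rewrite mulr_gt0 // ltr0n.
have cC_gt0 : 0 < ((b%:R * y)%:C)%C by rewrite ltcR.
have fpolyE : fpoly s b y = trinomial ((b%:R * y)%:C)%C s by [].
rewrite fpolyE; split=> [z|]; first exact: sqr_XsubC_ndvdp_trinomial.
have [l /andP[l_gt0 l_lt1] root_l] := trinomial_root_in_01 s c_gt0.
have lC_gt0 : 0 < (l%:C)%C by rewrite ltcR.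
have root_lC : root (trinomial ((b%:R * y)%:C)%C s) (l%:C)%C.
  by rewrite -map_trinomial rmorph_root.
exists l; split=> // z root_z z_neq_l.
by rewrite (gtr0_norm lC_gt0) (trinomial_root_norm_gt cC_gt0 lC_gt0 root_lC root_z).
Qed.
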